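(* A commutative semigroup $S$ has a non-universal monoid congruence if and only if $S$ has a subset $A$ with $\emptyset\neq A\neq S$ such that $\mathrm{Sep}\,A\neq\emptyset$.
   Context: For a semigroup $S$ and $A\subseteq S$, $\mathrm{Sep}\,A$ (the separator of $A$) is the set of all $x\in S$ with $xA\subseteq A$, $Ax\subseteq A$, $x(S\setminus A)\subseteq S\setminus A$ and $(S\setminus A)x\subseteq S\setminus A$. A congruence $p$ on $S$ is a monoid congruence if the factor semigroup $S/p$ has an identity element; it is universal if $p=S\times S$. *)

Definition associative {S : Type} (op : S -> S -> S) : Prop :=
  forall x y z, op (op x y) z = op x (op y z).

Definition commutative {S : Type} (op : S -> S -> S) : Prop :=
  forall x y, op x y = op y x.

Definition congruence {S : Type} (op : S -> S -> S) (p : S -> S -> Prop) : Prop :=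
  (forall x, p x x) /\
  (forall x y, p x y -> p y x) /\
  (forall x y z, p x y -> p y z -> p x z) /\
  (forall x y z, p x y -> p (op z x) (op z y) /\ p (op x z) (op y z)).

(* The factor semigroup S/p has an identity element: some class [e]
   with [e][x] = [x][e] = [x] for all x. *)
Definition monoid_congruence {S : Type} (op : S -> S -> S) (p : S -> S -> Prop) : Prop :=
  congruence op p /\ exists e, forall x, p (op e x) x /\ p (op x e) x.

Definition universal {S : Type} (p : S -> S -> Prop) : Prop :=
  forall x y, p x y.

Definition Sep {S : Type} (op : S -> S -> S) (A : S -> Prop) (x : S) : Prop :=
  (forall a, A a -> A (op x a)) /\
  (forall a, A a -> A (op a x)) /\
  (forall b, ~ A b -> ~ A (op x b)) /\
  (forall b, ~ A b -> ~ A (op b x)).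

(* Forward: an element e representing the identity of S/p lies in the separator
   of every p-class, and the class of e is proper since p is not universal.
   Backward: in a commutative semigroup the syntactic congruence of A (u ~ v iff
   su and sv lie in A together for every s in S^1) is a congruence; an element
   of Sep A acts as an identity modulo it, and it separates A from its
   complement, so it is not universal. *)

From Stdlib Require Import Classical.

Set Implicit Arguments.
Unset Strict Implicit.

Lemma Sep_mem_opl (S : Type) (op : S -> S -> S) (A : S -> Prop) x :
  Sep op A x -> forall u, A (op x u) <-> A u.
Proof.
  intros [Hl [_ [Hnl _]]] u; split; intro Hu.
  - apply NNPP; intro Hn; exact (Hnl u Hn Hu).
  - now apply Hl.
Qed.

Lemma identity_in_Sep_class (S : Type) (op : S -> S -> S) (p : S -> S -> Prop) e :
  congruence op p -> (forall u, p (op e u) u /\ p (op u e) u) ->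
  forall c, Sep op (p c) e.
Proof.
  intros [_ [Hsym [Htrans _]]] He c.
  repeat split.
  - intros a Ha; apply Htrans with a; [exact Ha | apply Hsym, He].
  - intros a Ha; apply Htrans with a; [exact Ha | apply Hsym, He].
  - intros b Hb Heb; apply Hb, Htrans with (op e b); [exact Heb | apply He].
  - intros b Hb Hbe; apply Hb, Htrans with (op b e); [exact Hbe | apply He].
Qed.

Lemma universal_of_full_class (S : Type) (op : S -> S -> S) (p : S -> S -> Prop) c :
  congruence op p -> (forall u, p c u) -> universal p.
Proof.
  intros [_ [Hsym [Htrans _]]] Hc u v.
  apply Htrans with c; [apply Hsym |]; apply Hc.
Qed.

Section Syntactic.

Variables (S : Type) (op : S -> S -> S).
Hypotheses (Hassoc : associative op) (Hcomm : commutative op).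
Variable A : S -> Prop.

Definition syntactic (u v : S) : Prop :=
  (A u <-> A v) /\ forall s, A (op s u) <-> A (op s v).

Lemma syntactic_congruence : congruence op syntactic.
Proof.
  unfold syntactic; split; [| split; [| split]].
  - intro u; split; [| intro s]; reflexivity.
  - intros u v [Huv Hs]; split; [| intro s; rewrite Hs]; tauto.
  - intros u v w [Huv Hs] [Hvw Ht]; split; [tauto | intro s; rewrite Hs; apply Ht].
  - intros u v z [Huv Hs]; split; split.
    + apply Hs.
    + intro s; rewrite <- !Hassoc; apply Hs.
    + rewrite (Hcomm u z), (Hcomm v z); apply Hs.
    + intro s; rewrite (Hcomm u z), (Hcomm v z), <- !Hassoc; apply Hs.
Qed.

Lemma Sep_syntactic_identity x : Sep op A x ->
  forall u, syntactic (op x u) u /\ syntactic (op u x) u.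
Proof.
  intros HxA u.
  assert (Hxl : syntactic (op x u) u).
  { split; [exact (Sep_mem_opl HxA u) |].
    intro s; rewrite <- Hassoc, (Hcomm s x), Hassoc; exact (Sep_mem_opl HxA _). }
  split; [exact Hxl | now rewrite Hcomm].
Qed.

Lemma syntactic_not_universal a b : A a -> ~ A b -> ~ universal syntactic.
Proof. intros Ha Hb Hu; apply Hb, (proj1 (Hu a b)), Ha. Qed.

End Syntactic.

Theorem corollary5 (S : Type) (op : S -> S -> S)
  (Hassoc : associative op) (Hcomm : commutative op) :
  (exists p : S -> S -> Prop, monoid_congruence op p /\ ~ universal p) <->
  (exists A : S -> Prop,
      (exists a, A a) /\ (exists b, ~ A b) /\ (exists x, Sep op A x)).
Proof.
  split.
  - intros [p [[Hp [e He]] Hnu]].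
    exists (p e); split; [exists e; exact (proj1 Hp e) |]; split.
    + apply NNPP; intro Hfull; apply Hnu, (universal_of_full_class (c := e) Hp).
      intro u; apply NNPP; intro Hu; apply Hfull; now exists u.
    + exists e; exact (identity_in_Sep_class Hp He e).
  - intros [A [[a Ha] [[b Hb] [x Hx]]]].
    exists (syntactic op A); split.
    + split; [exact (syntactic_congruence Hassoc Hcomm A) |].
      exists x; exact (Sep_syntactic_identity Hassoc Hcomm Hx).
    + exact (syntactic_not_universal Ha Hb).
Qed.
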